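(* Let $\psi:(0,1]\to(0,\infty)$ with $\psi(1)=1$, $\lim_{r\to0+}\psi(r)=0$ and $I_\psi\subset(0,1)$, and let $f\in C^\psi(\mathbb{R}^d)$. There exists a constant $C=C(\psi)$ such that $$[f]_{C^\psi}\le C\big(\|f\|_{C^0}+[[f]]_{C^\psi}\big).$$
   Context: $g:(0,1]\to(0,\infty)$ is almost increasing if $c\,g(r)\le g(R)$ for some $c\in(0,1]$ and all $0<r\le R\le1$, almost decreasing if $g(R)\le Cg(r)$ for some $C\ge1$ and all $0<r\le R\le1$. $M_\psi=\inf\{\alpha: \psi(r)/r^\alpha\text{ almost decreasing on }(0,1]\}$, $m_\psi=\sup\{\alpha: \psi(r)/r^\alpha\text{ almost increasing on }(0,1]\}$, $I_\psi=[m_\psi,M_\psi]$. $\|f\|_{C^0}=\sup|f|$. $[f]_{C^\psi}=\sup_{x\in\mathbb{R}^d}\sup_{0<|h|\le1}\frac{|f(x+h)-f(x)|}{\psi(|h|)}$ and $[[f]]_{C^\psi}=\sup_{x\in\mathbb{R}^d}\sup_{0<|h|\le1}\frac{|f(x+h)-2f(x)+f(x-h)|}{\psi(|h|)}$. When $m_\psi\in(0,1]$, $C^\psi(\mathbb{R}^d)$ is the space of bounded continuous $f$ with $[f]_{C^\psi}<\infty$. *)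

From HB Require Import structures.
From mathcomp Require Import all_boot all_order all_algebra.
From mathcomp Require Import all_classical all_reals all_analysis.
Set Implicit Arguments. Unset Strict Implicit. Unset Printing Implicit Defensive.
Import Order.TTheory GRing.Theory Num.Theory.
Import numFieldNormedType.Exports.
Local Open Scope classical_set_scope.
Local Open Scope ring_scope.

Section Defs.
Variable R : realType.

(* g : (0,1] -> (0,oo), represented as a function R -> R used only on (0,1] *)
Definition almost_increasing (g : R -> R) : Prop :=
  exists c : R, 0 < c <= 1 /\
    forall r s : R, 0 < r -> r <= s -> s <= 1 -> c * g r <= g s.

Definition almost_decreasing (g : R -> R) : Prop :=
  exists C : R, 1 <= C /\
    forall r s : R, 0 < r -> r <= s -> s <= 1 -> g s <= C * g r.

Definition M_psi (psi : R -> R) : \bar R :=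
  ereal_inf [set a%:E | a in [set a : R |
                 almost_decreasing (fun r => psi r / r `^ a)]].

Definition m_psi (psi : R -> R) : \bar R :=
  ereal_sup [set a%:E | a in [set a : R |
                 almost_increasing (fun r => psi r / r `^ a)]].

Definition enorm (d : nat) (h : 'rV[R]_d) : R :=
  Num.sqrt (\sum_(i < d) h ord0 i ^+ 2).

Definition supnorm (d : nat) (f : 'rV[R]_d -> R) : \bar R :=
  ereal_sup [set `|f x|%:E | x in [set: 'rV[R]_d]].

Definition holder_semi (psi : R -> R) (d : nat) (f : 'rV[R]_d -> R) : \bar R :=
  ereal_sup [set y : \bar R | exists x h : 'rV[R]_d,
    [/\ 0 < enorm h, enorm h <= 1 &
        y = (`|f (x + h) - f x| / psi (enorm h))%:E]].

Definition holder_semi2 (psi : R -> R) (d : nat) (f : 'rV[R]_d -> R) : \bar R :=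
  ereal_sup [set y : \bar R | exists x h : 'rV[R]_d,
    [/\ 0 < enorm h, enorm h <= 1 &
        y = (`|f (x + h) - 2 * f x + f (x - h)| / psi (enorm h))%:E]].

Definition Cpsi (psi : R -> R) (d : nat) : set ('rV[R]_d -> R) :=
  [set f | continuous f /\ (exists M : R, forall x, `|f x| <= M) /\
           (holder_semi psi f < +oo)%E].

End Defs.

From HB Require Import structures.
From mathcomp Require Import all_boot all_order all_algebra.
From mathcomp Require Import all_classical all_reals all_analysis.
From mathcomp Require Import ring lra.
Set Implicit Arguments. Unset Strict Implicit. Unset Printing Implicit Defensive.
Import Order.TTheory GRing.Theory Num.Theory.
Import numFieldNormedType.Exports.
Local Open Scope classical_set_scope.
Local Open Scope ring_scope.

(* Write D_h f(x) = f(x+h) - f(x).  The identity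
   D_h f(x) = (D_2h f(x) - (f(x+2h) - 2 f(x+h) + f(x))) / 2, iterated n times
   where n is the first index with 2^n |h| > 1, gives
   |D_h f(x)| <= 2 ||f|| / 2^n + [[f]] sum_(j<n) psi(2^j |h|) / 2^(j+1).
   Since psi(r)/r^a is almost decreasing for some a < 1 (this is M_psi < 1),
   psi(2^j |h|) <= C psi(|h|) 2^(ja): the sum is geometric with ratio
   2^(a-1) < 1, and 2^-n < |h| <= C psi(|h|) because psi(1) = 1. *)

Lemma enormZ (R : realType) (d : nat) (c : R) (h : 'rV[R]_d) :
  enorm (c *: h) = `|c| * enorm h.
Proof.
rewrite /enorm.
under eq_bigr => i _ do rewrite mxE exprMn.
by rewrite -big_distrr /= sqrtrM ?sqr_ge0 // sqrtr_sqr.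
Qed.

Lemma enorm_double (R : realType) (d : nat) (h : 'rV[R]_d) :
  enorm (h + h) = 2 * enorm h.
Proof. by rewrite -mulr2n -scaler_nat enormZ ger0_norm. Qed.

Section DyadicTelescoping.
Variables (R : realType) (d : nat) (f : 'rV[R]_d -> R) (M : R) (omega : R -> R).
Hypothesis f_bounded : forall z, `|f z| <= M.
Hypothesis second_diff_le : forall x k, 0 < enorm k -> enorm k <= 1 ->
  `|f (x + k) - 2 * f x + f (x - k)| <= omega (enorm k).

Lemma first_diff_le_dyadic_sum n x h : 0 < enorm h -> 2 ^+ n * enorm h <= 2 ->
  `|f (x + h) - f x| <=
    2 * M / 2 ^+ n + \sum_(j < n) omega (2 ^+ j * enorm h) / 2 ^+ j.+1.
Proof.
elim: n x h => [|n IH] x h h_gt0 h_le.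
  rewrite expr0 divr1 big_ord0 addr0.
  apply: le_trans (ler_normB _ _) _.
  by have := f_bounded (x + h); have := f_bounded x; lra.
have h_le1 : enorm h <= 1.
  by move: h_le; rewrite exprS; have := exprn_ege1 n (ler1n R 2); nra.
have IH2 := IH x (h + h); rewrite enorm_double in IH2.
have {IH2} := IH2 ltac:(lra) ltac:(by rewrite mulrA -exprSr).
have := second_diff_le (x + h) h_gt0 h_le1.
rewrite addrK -[x + h + h]addrA big_ord_recl /= expr0 mul1r expr1.
have -> : \sum_(i < n) omega (2 ^+ (bump 0 i) * enorm h) / 2 ^+ (bump 0 i).+1 =
    (\sum_(j < n) omega (2 ^+ j * (2 * enorm h)) / 2 ^+ j.+1) / 2.
  rewrite mulr_suml; apply: eq_bigr => i _.
  by rewrite /bump /= add1n mulrA -exprSr [_ ^+ i.+2]exprSr invfM mulrA.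
rewrite [2 ^+ n.+1]exprSr invfM mulrA.
set S := \sum_(j < n) _; set A := f (x + (h + h)) => second first.
have -> : f (x + h) - f x = ((A - f x) - (A - 2 * f (x + h) + f x)) / 2 by field.
rewrite normrM normfV [`|2|]ger0_norm //.
have := ler_normB (A - f x) (A - 2 * f (x + h) + f x).
lra.
Qed.

End DyadicTelescoping.

Lemma exists_dyadic_scale (R : realType) (e : R) : 0 < e <= 1 ->
  exists n, 2 ^+ n * e <= 1 < 2 ^+ n.+1 * e.
Proof.
move=> /andP[e_gt0 e_le1].
pose P n := 1 < 2 ^+ n * e.
have exP : exists n, P n.
  exists (Num.Def.archi_bound e^-1).
  have /archi_boundP : 0 <= e^-1 by rewrite invr_ge0 ltW.
  set N := Num.Def.archi_bound _ => ltN.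
  have : (N%:R : R) < 2 ^+ N by rewrite -natrX ltr_nat ltn_expl.
  move=> /(lt_trans ltN); rewrite -(ltr_pM2r e_gt0).
  by rewrite mulVf ?gt_eqF.
case: (ex_minnP exP) => -[|n]; rewrite /P.
  by rewrite expr0 mul1r; lra.
move=> Pn minP; exists n; rewrite Pn andbT leNgt.
by apply/negP => /minP; rewrite ltnn.
Qed.

Lemma powR2_lt2 (R : realType) (a : R) : a < 1 -> 2 `^ a < 2.
Proof.
move=> a_lt1; have ln2_gt0 : 0 < ln (2 : R) by apply: ln_gt0; lra.
rewrite /powR pnatr_eq0 /= -[X in _ < X](@lnK _ 2) ?posrE //.
by rewrite ltr_expR; nra.
Qed.

Lemma powR_exprn (R : realType) (x a : R) (j : nat) : 0 <= x ->
  (x ^+ j) `^ a = (x `^ a) ^+ j.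
Proof.
by move=> x_ge0; rewrite -powR_mulrn // -powRrM mulrC powRrM powR_mulrn ?powR_ge0.
Qed.

Section AlmostDecreasing.
Variables (R : realType) (psi : R -> R) (a C0 : R).
Hypothesis psi_gt0 : forall r, 0 < r <= 1 -> 0 < psi r.
Hypothesis psi1 : psi 1 = 1.
Hypothesis a_lt1 : a < 1.
Hypothesis psi_almost_decreasing : forall r s, 0 < r -> r <= s -> s <= 1 ->
  psi s / s `^ a <= C0 * (psi r / r `^ a).

Lemma le_scaled_psi e : 0 < e <= 1 -> e <= C0 * psi e.
Proof.
move=> /andP[e_gt0 e_le1].
have := psi_almost_decreasing e_gt0 e_le1 (lexx 1).
rewrite psi1 powR1 divr1 mulrA ler_pdivlMr ?powR_gt0 //.
by have := ger1_powR (a := e) ltac:(lra) (ltW a_lt1); lra.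
Qed.

Lemma psi_dyadic_le j e : 0 < e -> 2 ^+ j * e <= 1 ->
  psi (2 ^+ j * e) <= C0 * psi e * (2 `^ a) ^+ j.
Proof.
move=> e_gt0 je_le1.
have two_j_ge1 : 1 <= (2 : R) ^+ j by apply: exprn_ege1; lra.
have je_ge_e : e <= 2 ^+ j * e := ler_peMl (ltW e_gt0) two_j_ge1.
have := psi_almost_decreasing e_gt0 je_ge_e je_le1.
rewrite (powRM _ (exprn_ge0 _ (ler0n _ 2)) (ltW e_gt0)) powR_exprn //.
have ea_gt0 : 0 < e `^ a by apply: powR_gt0.
have two_aj_gt0 : 0 < (2 `^ a) ^+ j by rewrite exprn_gt0 // powR_gt0.
rewrite ler_pdivrMr ?mulr_gt0 // => /le_trans; apply.
by rewrite [_ ^+ j * _]mulrC !mulrA divfK ?gt_eqF.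
Qed.

Lemma dyadic_psi_sum_le n e : 0 < e -> 2 ^+ n * e <= 1 ->
  \sum_(j < n.+1) psi (2 ^+ j * e) / 2 ^+ j.+1 <= C0 * psi e / (2 - 2 `^ a).
Proof.
move=> e_gt0 ne_le1.
have two_a_gt0 : 0 < 2 `^ a by apply: powR_gt0.
have two_a_lt2 := powR2_lt2 a_lt1.
have e_le1 : e <= 1.
  exact: le_trans (ler_peMl (ltW e_gt0) (exprn_ege1 n (ler1n R 2))) ne_le1.
have psie_gt0 : 0 < psi e by apply: psi_gt0; rewrite e_gt0.
have C0psie_ge0 : 0 <= C0 * psi e / 2.
  apply: divr_ge0 => //; apply: ltW; apply: (lt_le_trans e_gt0).
  by apply: le_scaled_psi; rewrite e_gt0.
set q := 2 `^ a / 2.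
have q_gt0 : 0 < q by rewrite divr_gt0.
have q_lt1 : `|q| < 1 by rewrite gtr0_norm // /q ltr_pdivrMr //; lra.
have term_le (j : 'I_n.+1) :
    psi (2 ^+ j * e) / 2 ^+ j.+1 <= geometric (C0 * psi e / 2) q j.
  have je_le1 : 2 ^+ j * e <= 1.
    apply: le_trans ne_le1; rewrite ler_pM2r // ler_eXn2l //; last lra.
    by rewrite -ltnS ltn_ord.
  rewrite /geometric /= /q expr_div_n mulrACA exprSr invfM [_^-1 * _^-1]mulrC.
  by rewrite ler_pM2r ?mulr_gt0 ?invr_gt0 ?exprn_gt0 // psi_dyadic_le.
apply: le_trans (ler_sum _ (fun j _ => term_le j)) _.
have := geometric_le_lim n.+1 C0psie_ge0 q_gt0 q_lt1.
rewrite seriesEord /= => /le_trans; apply.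
by rewrite /q -mulrA -invfM mulrBr mulr1 [2 * _]mulrC divfK ?pnatr_eq0.
Qed.

Lemma first_diff_le_psi (d : nat) (f : 'rV[R]_d -> R) (M K : R) :
  0 <= K -> (forall z, `|f z| <= M) ->
  (forall x k, 0 < enorm k -> enorm k <= 1 ->
    `|f (x + k) - 2 * f x + f (x - k)| <= K * psi (enorm k)) ->
  forall x h, 0 < enorm h -> enorm h <= 1 ->
  `|f (x + h) - f x| <= C0 * psi (enorm h) * (2 * M + K / (2 - 2 `^ a)).
Proof.
move=> K_ge0 f_bounded second_diff_le x h h_gt0 h_le1.
have M_ge0 : 0 <= M := le_trans (normr_ge0 _) (f_bounded x).
have [n /andP[ne_le1 ne_gt1]] : exists n, 2 ^+ n * enorm h <= 1 < 2 ^+ n.+1 * enorm h.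
  by apply: exists_dyadic_scale; rewrite h_gt0.
have two_n1_le2 : 2 ^+ n.+1 * enorm h <= 2.
  by rewrite exprS -mulrA ler_piMr.
have := @first_diff_le_dyadic_sum _ _ f M (fun r => K * psi r) f_bounded
  second_diff_le n.+1 x h h_gt0 two_n1_le2.
move=> /le_trans; apply; rewrite mulrDr; apply: lerD.
  have e_le : enorm h <= C0 * psi (enorm h) by apply: le_scaled_psi; rewrite h_gt0.
  rewrite [C0 * _ * _]mulrC.
  apply: (le_trans (y := 2 * M * enorm h)); last by rewrite ler_wpM2l ?mulr_ge0.
  rewrite ler_pdivrMr ?exprn_gt0 //.
  have -> : 2 * M * enorm h * 2 ^+ n.+1 = 2 * M * (2 ^+ n.+1 * enorm h) by ring.
  by apply: ler_peMr; [rewrite mulr_ge0 | rewrite ltW].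
under eq_bigr do rewrite /= -mulrA.
rewrite -big_distrr /= mulrCA ler_wpM2l //.
exact: dyadic_psi_sum_le.
Qed.

End AlmostDecreasing.

Lemma almost_decreasing_of_M_psi_lt (R : realType) (psi : R -> R) (b : R) :
  (M_psi psi < b%:E)%E ->
  exists2 a, a < b & almost_decreasing (fun r => psi r / r `^ a).
Proof. by move=> /ereal_inf_lt[_ [a decr <-]]; rewrite lte_fin; exists a. Qed.

Lemma supnorm_ge (R : realType) (d : nat) (f : 'rV[R]_d -> R) x :
  (`|f x|%:E <= supnorm f)%E.
Proof. by apply: ereal_sup_ubound; exists x. Qed.

Lemma supnorm_fin_num (R : realType) (d : nat) (f : 'rV[R]_d -> R) (M : R) :
  (forall x, `|f x| <= M) -> supnorm f \is a fin_num.
Proof.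
move=> f_bounded; rewrite fin_numElt; apply/andP; split.
  exact: lt_le_trans (ltNyr _) (supnorm_ge f 0).
apply: le_lt_trans (ltry M).
by apply: ge_ereal_sup => _ [z _ <-]; rewrite lee_fin.
Qed.

Lemma le_fine_supnorm (R : realType) (d : nat) (f : 'rV[R]_d -> R) (M : R) :
  (forall x, `|f x| <= M) -> forall x, `|f x| <= fine (supnorm f).
Proof.
by move=> f_bounded x; rewrite -lee_fin fineK ?supnorm_ge ?(supnorm_fin_num f_bounded).
Qed.

Lemma holder_semi2_ge (R : realType) (psi : R -> R) (d : nat) (f : 'rV[R]_d -> R) x k :
  0 < enorm k -> enorm k <= 1 ->
  ((`|f (x + k) - 2 * f x + f (x - k)| / psi (enorm k))%:E <= holder_semi2 psi f)%E.
Proof. by move=> k_gt0 k_le1; apply: ereal_sup_ubound; exists x, k. Qed.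

Lemma second_diff_le_holder_semi2 (R : realType) (psi : R -> R) (d : nat)
    (f : 'rV[R]_d -> R) (K : R) :
  (forall r, 0 < r <= 1 -> 0 < psi r) -> holder_semi2 psi f = K%:E ->
  forall x k, 0 < enorm k -> enorm k <= 1 ->
  `|f (x + k) - 2 * f x + f (x - k)| <= K * psi (enorm k).
Proof.
move=> psi_gt0 semi2_K x k k_gt0 k_le1.
have psik_gt0 : 0 < psi (enorm k) by apply: psi_gt0; rewrite k_gt0.
by have := holder_semi2_ge psi f x k_gt0 k_le1; rewrite semi2_K lee_fin ler_pdivrMr.
Qed.

Theorem lemma2p2 (R : realType) (psi : R -> R)
  (psi_pos : forall r : R, 0 < r <= 1 -> 0 < psi r)
  (psi1 : psi 1 = 1)
  (psi0 : psi r @[r --> 0^'+] --> 0)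
  (Ipsi : (0 < m_psi psi)%E /\ (M_psi psi < 1)%E) :
  exists C : R, forall (d : nat) (f : 'rV[R]_d -> R),
    @Cpsi R psi d f ->
    (holder_semi psi f <= C%:E * (supnorm f + holder_semi2 psi f))%E.
Proof.
have [a a_lt1 [C0 [C0_ge1 psi_decr]]] := almost_decreasing_of_M_psi_lt Ipsi.2.
have w_ge0 : 0 <= (2 - 2 `^ a)^-1 by rewrite invr_ge0 subr_ge0 ltW ?powR2_lt2.
exists (C0 * (2 + (2 - 2 `^ a)^-1)) => d f [_ [[M0 f_bounded] _]].
have f_le_M := le_fine_supnorm f_bounded.
rewrite -(fineK (supnorm_fin_num f_bounded)).
apply: ge_ereal_sup => _ [x [h [h_gt0 h_le1 ->]]].
have psih_gt0 : 0 < psi (enorm h) by apply: psi_pos; rewrite h_gt0.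
have := holder_semi2_ge psi f x h_gt0 h_le1.
(* The case split comes after choosing h: for d = 0 the seminorm [[f]] is -oo. *)
case semi2_K: (holder_semi2 psi f) => [K | | ] second_le; last first.
- by rewrite leeNy_eq in second_le.
- by rewrite /= gt0_muley ?leey // lte_fin mulr_gt0 //; lra.
have K_ge0 : 0 <= K.
  by rewrite lee_fin in second_le; apply: le_trans second_le; rewrite divr_ge0 // ltW.
have M_ge0 : 0 <= fine (supnorm f) := le_trans (normr_ge0 _) (f_le_M x).
rewrite -EFinD -EFinM lee_fin ler_pdivrMr //.
apply: le_trans (first_diff_le_psi psi_pos psi1 a_lt1 psi_decr K_ge0 f_le_M
  (second_diff_le_holder_semi2 psi_pos semi2_K) x h_gt0 h_le1) _.
set M := fine _; set w := (2 - _)^-1.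
have -> : C0 * (2 + w) * (M + K) * psi (enorm h) =
  C0 * psi (enorm h) * (2 * M + K * w) + C0 * psi (enorm h) * (2 * K + w * M).
  by ring.
by rewrite lerDl !mulr_ge0 ?addr_ge0 ?mulr_ge0 // ?ltW //; lra.
Qed.
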